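(* Let $M=P+\varepsilon D\in\mathbb{DH}[t]$ be a monic polynomial and let $N\in\mathbb{D}[t]$ be a monic polynomial of degree two which divides the norm polynomial $M\overline{M}$ in $\mathbb{D}[t]$, and suppose that the primal part of $N$ (a real polynomial) does not divide $P$ in $\mathbb{H}[t]$. Then there exists a unique $h\in\mathbb{DH}$ such that $t-h$ is a right factor of $M$ (i.e. $M=Q(t-h)$ for some $Q\in\mathbb{DH}[t]$) and $(t-h)(t-\overline{h})=N$.
   Context: $\mathbb{D}=\mathbb{R}[\varepsilon]/\langle\varepsilon^2\rangle$ denotes the dual numbers. $\mathbb{H}$ denotes the real quaternions with basis $1,\mathbf{i},\mathbf{j},\mathbf{k}$, $\mathbf{i}^2=\mathbf{j}^2=\mathbf{k}^2=\mathbf{i}\mathbf{j}\mathbf{k}=-1$. The dual quaternions $\mathbb{DH}$ are the $\mathbb{D}$-algebra $\mathbb{H}\otimes_{\mathbb{R}}\mathbb{D}$ ($\varepsilon$ commutes with $\mathbf{i},\mathbf{j},\mathbf{k}$); every $q\in\mathbb{DH}$ is $q=p+\varepsilon d$ with $p,d\in\mathbb{H}$ (primal and dual part). The conjugate of $q=q_0+q_1\mathbf{i}+q_2\mathbf{j}+q_3\mathbf{k}$ ($q_i\in\mathbb{D}$) is $\overline{q}=q_0-q_1\mathbf{i}-q_2\mathbf{j}-q_3\mathbf{k}$. $\mathbb{DH}[t]$ is the ring of polynomials with dual quaternion coefficients in which the indeterminate $t$ commutes with all coefficients. For $M=\sum m_it^i$, $\overline{M}=\sum\overline{m_i}t^i$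 and the norm polynomial is $M\overline{M}=\overline{M}M\in\mathbb{D}[t]$. Every $M\in\mathbb{DH}[t]$ is written $M=P+\varepsilon D$ with $P,D\in\mathbb{H}[t]$ (primal and dual part). Monic means leading coefficient $1$. *)

From HB Require Import structures.
From mathcomp Require Import all_boot all_order all_algebra.
From mathcomp Require Import ring.
Set Implicit Arguments.
Unset Strict Implicit.
Unset Printing Implicit Defensive.
Import GRing.Theory.
Local Open Scope ring_scope.

(* Dual numbers  R[eps]/(eps^2) : pairs a + eps b.                      *)
Section Dual.
Variable R : comNzRingType.

Record dual := Dual { dprim : R; ddual : R }.

Definition dual_to (x : dual) : R * R := (dprim x, ddual x).
Definition dual_of (p : R * R) : dual := Dual p.1 p.2.
Lemma dual_toK : cancel dual_to dual_of. Proof. by case. Qed.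
HB.instance Definition _ := Choice.copy dual (can_type dual_toK).

Definition dzero := Dual 0 0.
Definition done_ := Dual 1 0.
Definition dopp x := Dual (- dprim x) (- ddual x).
Definition dadd x y := Dual (dprim x + dprim y) (ddual x + ddual y).
(* (a + eps b)(c + eps d) = ac + eps (ad + bc) *)
Definition dmul x y :=
  Dual (dprim x * dprim y) (dprim x * ddual y + ddual x * dprim y).

Lemma daddA : associative dadd.
Proof. by move=> [? ?] [? ?] [? ?]; rewrite /dadd /=; congr Dual; ring. Qed.
Lemma daddC : commutative dadd.
Proof. by move=> [? ?] [? ?]; rewrite /dadd /=; congr Dual; ring. Qed.
Lemma dadd0 : left_id dzero dadd.
Proof. by move=> [? ?]; rewrite /dadd /=; congr Dual; ring. Qed.
Lemma daddN : left_inverse dzero dopp dadd.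
Proof. by move=> [? ?]; rewrite /dadd /=; congr Dual; ring. Qed.
Lemma dmulA : associative dmul.
Proof. by move=> [? ?] [? ?] [? ?]; rewrite /dmul /=; congr Dual; ring. Qed.
Lemma dmul1 : left_id done_ dmul.
Proof. by move=> [? ?]; rewrite /dmul /=; congr Dual; ring. Qed.
Lemma dmul1r : right_id done_ dmul.
Proof. by move=> [? ?]; rewrite /dmul /=; congr Dual; ring. Qed.
Lemma dmulDl : left_distributive dmul dadd.
Proof. by move=> [? ?] [? ?] [? ?]; rewrite /dmul /dadd /=; congr Dual; ring. Qed.
Lemma dmulDr : right_distributive dmul dadd.
Proof. by move=> [? ?] [? ?] [? ?]; rewrite /dmul /dadd /=; congr Dual; ring. Qed.
Lemma done_neq0 : done_ != dzero.
Proof. by apply/eqP => -[] /eqP; rewrite oner_eq0. Qed.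
Lemma dmulC : commutative dmul.
Proof. by move=> [? ?] [? ?]; rewrite /dmul /=; congr Dual; ring. Qed.

HB.instance Definition _ := GRing.isNzRing.Build dual
  daddA daddC dadd0 daddN dmulA dmul1 dmul1r dmulDl dmulDr done_neq0.
HB.instance Definition _ := GRing.PzRing_hasCommutativeMul.Build dual dmulC.

Definition eps : dual := Dual 0 1.
End Dual.

(* Quaternions over a commutative ring A: q0 + q1 i + q2 j + q3 k,      *)
(* with i^2 = j^2 = k^2 = ijk = -1.                                     *)
Section Quat.
Variable A : comNzRingType.

Record quat := Quat { q0 : A; q1 : A; q2 : A; q3 : A }.

Definition quat_to (x : quat) : A * A * A * A := (q0 x, q1 x, q2 x, q3 x).
Definition quat_of (p : A * A * A * A) : quat := Quat p.1.1.1 p.1.1.2 p.1.2 p.2.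
Lemma quat_toK : cancel quat_to quat_of. Proof. by case. Qed.
HB.instance Definition _ := Choice.copy quat (can_type quat_toK).

Definition qzero := Quat 0 0 0 0.
Definition qone := Quat 1 0 0 0.
Definition qopp x := Quat (- q0 x) (- q1 x) (- q2 x) (- q3 x).
Definition qadd x y := Quat (q0 x + q0 y) (q1 x + q1 y) (q2 x + q2 y) (q3 x + q3 y).
Definition qmul x y := Quat
  (q0 x * q0 y - q1 x * q1 y - q2 x * q2 y - q3 x * q3 y)
  (q0 x * q1 y + q1 x * q0 y + q2 x * q3 y - q3 x * q2 y)
  (q0 x * q2 y - q1 x * q3 y + q2 x * q0 y + q3 x * q1 y)
  (q0 x * q3 y + q1 x * q2 y - q2 x * q1 y + q3 x * q0 y).

Lemma qaddA : associative qadd.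
Proof. by move=> [? ? ? ?] [? ? ? ?] [? ? ? ?]; rewrite /qadd /=; congr Quat; ring. Qed.
Lemma qaddC : commutative qadd.
Proof. by move=> [? ? ? ?] [? ? ? ?]; rewrite /qadd /=; congr Quat; ring. Qed.
Lemma qadd0 : left_id qzero qadd.
Proof. by move=> [? ? ? ?]; rewrite /qadd /=; congr Quat; ring. Qed.
Lemma qaddN : left_inverse qzero qopp qadd.
Proof. by move=> [? ? ? ?]; rewrite /qadd /=; congr Quat; ring. Qed.
Lemma qmulA : associative qmul.
Proof. by move=> [? ? ? ?] [? ? ? ?] [? ? ? ?]; rewrite /qmul /=; congr Quat; ring. Qed.
Lemma qmul1 : left_id qone qmul.
Proof. by move=> [? ? ? ?]; rewrite /qmul /=; congr Quat; ring. Qed.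
Lemma qmul1r : right_id qone qmul.
Proof. by move=> [? ? ? ?]; rewrite /qmul /=; congr Quat; ring. Qed.
Lemma qmulDl : left_distributive qmul qadd.
Proof. by move=> [? ? ? ?] [? ? ? ?] [? ? ? ?]; rewrite /qmul /qadd /=; congr Quat; ring. Qed.
Lemma qmulDr : right_distributive qmul qadd.
Proof. by move=> [? ? ? ?] [? ? ? ?] [? ? ? ?]; rewrite /qmul /qadd /=; congr Quat; ring. Qed.
Lemma qone_neq0 : qone != qzero.
Proof. by apply/eqP => -[] /eqP; rewrite oner_eq0. Qed.

HB.instance Definition _ := GRing.isNzRing.Build quat
  qaddA qaddC qadd0 qaddN qmulA qmul1 qmul1r qmulDl qmulDr qone_neq0.

Definition qconj (x : quat) : quat := Quat (q0 x) (- q1 x) (- q2 x) (- q3 x).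
Definition qscal (a : A) : quat := Quat a 0 0 0.
End Quat.

Definition qmap (A B : comNzRingType) (f : A -> B) (x : quat A) : quat B :=
  Quat (f (q0 x)) (f (q1 x)) (f (q2 x)) (f (q3 x)).

Notation H R := (quat R).
Notation DH R := (quat (dual R)).

Definition pconj (A : comNzRingType) (M : {poly quat A}) : {poly quat A} :=
  map_poly (@qconj A) M.

Definition primal_poly (R : comNzRingType) (M : {poly DH R}) : {poly H R} :=
  map_poly (qmap (@dprim R)) M.

Definition primal_dpoly (R : comNzRingType) (N : {poly dual R}) : {poly R} :=
  map_poly (@dprim R) N.

Definition scal_poly (A : comNzRingType) (N : {poly A}) : {poly quat A} :=
  map_poly (@qscal A) N.

From HB Require Import structures.
From mathcomp Require Import all_boot all_order all_algebra.
From mathcomp Require Import reals.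
From mathcomp Require Import ring lra.
Import GRing.Theory.
Set Implicit Arguments. Unset Strict Implicit.
Local Open Scope ring_scope.

(* Write N for the monic quadratic divisor of the norm polynomial M conj(M),
   and divide M by N (which is central in DH[t]): M = Q N + (r1 t + r0).
   Since N divides M conj(M), it also divides the norm of the remainder, and
   comparing coefficients gives

       qnorm r0 = qnorm r1 * N_0,    qpolar r0 r1 = qnorm r1 * N_1.

   If qnorm r1 is invertible, the remainder has the unique right root
   h = - qnorm(r1)^-1 conj(r1) r0, and these two relations say exactly that
   -(h + conj h) = N_1 and h conj h = N_0, i.e. (t - h)(t - conj h) = N; a
   right factor t - h of M with this property must be a right root of the
   remainder, whence uniqueness.

   For dual quaternions, qnorm r1 is invertible unless its primal part is 0.
   Over the reals a quaternion of norm zero vanishes, so in that case both r1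
   and r0 have zero primal part, and the primal part of N would divide the
   primal part P of M, contrary to the hypothesis. *)

Section QuaternionAlgebra.
Variable A : comNzRingType.
Implicit Types (r s : quat A) (a b : A).

Definition qnorm r : A := q0 r ^+ 2 + q1 r ^+ 2 + q2 r ^+ 2 + q3 r ^+ 2.

Definition qpolar r s : A :=
  2 * (q0 r * q0 s + q1 r * q1 s + q2 r * q2 s + q3 r * q3 s).

Lemma qmulE r s : r * s = qmul r s. Proof. by []. Qed.
Lemma qaddE r s : r + s = qadd r s. Proof. by []. Qed.
Lemma qoppE r : - r = qopp r. Proof. by []. Qed.

Ltac quat_ring := repeat match goal with r : quat A |- _ => case: r end;
  intros; rewrite ?qmulE ?qaddE ?qoppE /qmul /qadd /qopp
     /qconj /qscal /qnorm /qpolar /=; congr Quat; ring.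

Lemma mulq_conj r : r * qconj r = qscal (qnorm r). Proof. quat_ring. Qed.
Lemma conjq_mul r : qconj r * r = qscal (qnorm r). Proof. quat_ring. Qed.
Lemma mulq_conj_polar r s : r * qconj s + s * qconj r = qscal (qpolar r s).
Proof. quat_ring. Qed.
Lemma conjq_mul_polar r s : qconj s * r + qconj r * s = qscal (qpolar r s).
Proof. quat_ring. Qed.
Lemma qconjM r s : qconj (r * s) = qconj s * qconj r. Proof. quat_ring. Qed.
Lemma qscal_central a r : qscal a * r = r * qscal a. Proof. quat_ring. Qed.
Lemma qconj_mulr_scal r a : qconj (r * qscal a) = qconj r * qscal a.
Proof. quat_ring. Qed.
Lemma qconj_scal a : qconj (qscal a) = qscal a. Proof. quat_ring. Qed.
Lemma qscal_inj : injective (@qscal A). Proof. by move=> a b []. Qed.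
Lemma qconjK : involutive (@qconj A). Proof. by move=> r; quat_ring. Qed.

Fact qscal_is_zmod_morphism : zmod_morphism (@qscal A).
Proof. by move=> a b; quat_ring. Qed.
Fact qscal_is_monoid_morphism : monoid_morphism (@qscal A).
Proof. by split=> [|a b]; quat_ring. Qed.
HB.instance Definition _ :=
  GRing.isZmodMorphism.Build A (quat A) (@qscal A) qscal_is_zmod_morphism.
HB.instance Definition _ :=
  GRing.isMonoidMorphism.Build A (quat A) (@qscal A) qscal_is_monoid_morphism.

Fact qconj_is_zmod_morphism : zmod_morphism (@qconj A).
Proof. by move=> r s; quat_ring. Qed.
HB.instance Definition _ :=
  GRing.isZmodMorphism.Build (quat A) (quat A) (@qconj A) qconj_is_zmod_morphism.
End QuaternionAlgebra.

Section QuaternionPolynomials.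
Variable A : comNzRingType.
Implicit Types (p : {poly quat A}) (n : {poly A}).

Lemma scal_polyM n m : scal_poly (n * m) = scal_poly n * scal_poly m.
Proof. exact: rmorphM. Qed.

Lemma size_scal_poly n : size (scal_poly n) = size n.
Proof. by rewrite size_map_inj_poly //; exact: qscal_inj. Qed.

Lemma scal_poly_central n p : scal_poly n * p = p * scal_poly n.
Proof.
apply/polyP => i; rewrite coefMr coefM; apply: eq_bigr => j _.
by rewrite coef_map qscal_central.
Qed.

Lemma size_pconj p : size (pconj p) = size p.
Proof.
by rewrite size_map_inj_poly //; [exact: (inv_inj (@qconjK A)) | exact: raddf0].
Qed.

Lemma pconjD p q : pconj (p + q) = pconj p + pconj q.
Proof. exact: raddfD. Qed.

Lemma pconjMr_scal p n : pconj (p * scal_poly n) = pconj p * scal_poly n.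
Proof.
apply/polyP => i; rewrite coef_map !coefM raddf_sum; apply: eq_bigr => j _.
by rewrite !coef_map /= qconj_mulr_scal.
Qed.

End QuaternionPolynomials.

Section LowDegree.
Variable B : nzRingType.
Implicit Types (p q r P : {poly B}) (a b x : B).

Lemma size2_polyE p : (size p <= 2)%N -> p = 'X * (p`_1)%:P + (p`_0)%:P.
Proof.
move=> sp; apply/polyP => -[|[|i]]; rewrite !coefD coefXM !coefC //=.
- by rewrite !add0r.
- by rewrite addr0.
- by rewrite nth_default ?(leq_trans sp) // !addr0.
Qed.

Lemma size3_polyE p : (size p <= 3)%N ->
  p = 'X^2 * (p`_2)%:P + 'X * (p`_1)%:P + (p`_0)%:P.
Proof.
move=> sp; apply/polyP => -[|[|[|i]]]; rewrite !coefD coefXnM coefXM !coefC //=.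
- by rewrite !add0r.
- by rewrite add0r addr0.
- by rewrite !addr0.
- by rewrite nth_default ?(leq_trans sp) // !addr0.
Qed.

Lemma mul_XsubC a b :
  ('X - a%:P) * ('X - b%:P) = 'X^2 + (- (a + b))%:P * 'X + (a * b)%:P.
Proof.
rewrite mulrBl !mulrBr -(commr_polyX b%:P) -polyCM expr2 polyCN polyCD.
rewrite mulNr mulrDl opprB opprD [(a * b)%:P - _]addrC !addrA.
by congr (_ + _); rewrite -!addrA; congr (_ + _); exact: addrC.
Qed.

Lemma mul_XsubC_eq p a b : (size p <= 3)%N -> p`_2 = 1 ->
  - (a + b) = p`_1 -> a * b = p`_0 -> ('X - a%:P) * ('X - b%:P) = p.
Proof.
move=> sp p2 p1 p0; rewrite mul_XsubC [RHS]size3_polyE // p2 p1 p0 mulr1.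
by rewrite commr_polyX.
Qed.

Lemma mul_XsubC_comm a b : a * b = b * a ->
  ('X - a%:P) * ('X - b%:P) = ('X - b%:P) * ('X - a%:P).
Proof. by move=> ab; rewrite !mul_XsubC ab (addrC a). Qed.

Lemma linear_right_factor p a : (size p <= 2)%N ->
  (exists P, p = P * ('X - a%:P)) <-> p`_1 * a + p`_0 = 0.
Proof.
move=> sp; split=> [[P defp] | root_a].
  have sP : (size P <= 1)%N.
    have [-> | nzP] := eqVneq P 0; first by rewrite size_poly0.
    by move: sp; rewrite defp size_Mmonic ?monicXsubC // size_XsubC addn2.
  rewrite defp (size1_polyC sP) mulrBr -polyCM commr_polyX.
  by rewrite !coefB !coefXM !coefC /= sub0r subr0 subrr.
exists (p`_1)%:P; rewrite {1}(size2_polyE sp) mulrBr -polyCM commr_polyX.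
by rewrite -(addr0_eq root_a) polyCN.
Qed.

Lemma coef_mul_linear p q r x : (size p <= 2)%N -> (size q <= 2)%N ->
  p * q = x%:P * r ->
  [/\ p`_1 * q`_1 = x * r`_2, p`_0 * q`_1 + p`_1 * q`_0 = x * r`_1
    & p`_0 * q`_0 = x * r`_0].
Proof.
move=> sp sq pq; have coefpq k : (p * q)`_k = x * r`_k by rewrite pq coefCM.
split; rewrite -coefpq coefM !big_ord_recr big_ord0 /= ?add0r ?subn0 ?subnn //.
by rewrite [q`_2]nth_default // [p`_2]nth_default // mul0r mulr0 add0r addr0.
Qed.

Lemma rem_mul_central M M' Q Q' R R' S K :
  (forall p, p * S = S * p) -> M = Q * S + R -> M' = Q' * S + R' ->
  M * M' = K * S -> R * R' = (K - M * Q' - Q * R') * S.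
Proof.
move=> centS defM defM' MM'.
have -> : R = M - Q * S by rewrite defM addrC addKr.
rewrite mulrBl -[Q * S * R']mulrA -centS mulrA.
have -> : M * R' = M * M' - M * Q' * S.
  by rewrite defM' mulrDr mulrA addrAC subrr add0r.
by rewrite MM' -!mulrBl.
Qed.
End LowDegree.

Section RemainderNorm.
Variables (A : comNzRingType) (N K : {poly A}) (M Q Rm : {poly quat A}).
Hypotheses (monN : N \is monic) (sizeN : size N = 3%N).
Hypothesis normM : M * pconj M = scal_poly (N * K).
Hypotheses (divM : M = Q * scal_poly N + Rm) (sizeRm : (size Rm <= 2)%N).

Let sizeS : size (scal_poly N) = 3%N. Proof. by rewrite size_scal_poly. Qed.

Lemma remainder_norm :
  qnorm Rm`_0 = qnorm Rm`_1 * N`_0 /\ qpolar Rm`_0 Rm`_1 = qnorm Rm`_1 * N`_1.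
Proof.
have N2 : N`_2 = 1 by move/monicP: monN; rewrite /lead_coef sizeN.
have monS : scal_poly N \is monic by exact: monic_map.
have centS p : p * scal_poly N = scal_poly N * p by rewrite scal_poly_central.
have sizeRc : (size (pconj Rm) <= 2)%N by rewrite size_pconj.
have divMc : pconj M = pconj Q * scal_poly N + pconj Rm.
  by rewrite {1}divM pconjD pconjMr_scal.
have normM' : M * pconj M = scal_poly K * scal_poly N.
  by rewrite normM mulrC scal_polyM.
have normRm := rem_mul_central centS divM divMc normM'.
move: normRm; set X := (_ - _ - _) => normRm.
(* Rm conj(Rm) has degree at most 2 = deg N, so the cofactor X is constant. *)
have sizeX : (size X <= 1)%N.
  have [-> | nzX] := eqVneq X 0; first by rewrite size_poly0.
  have : (size (Rm * pconj Rm)%R <= 3)%N.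
    apply: leq_trans (size_polyMleq _ _) _.
    by rewrite size_pconj -subn1 leq_subLR; exact: leq_add sizeRm sizeRm.
  by rewrite normRm size_Mmonic // sizeS addn3.
move: normRm; rewrite (size1_polyC sizeX) => normRm.
(* Compare coefficients of Rm conj(Rm) = x N; the leading ones give
   x = qnorm r1. *)
have [e2 e1 e0] := coef_mul_linear sizeRm sizeRc normRm.
rewrite !coef_map /= N2 rmorph1 mulr1 mulq_conj in e2 e1 e0.
rewrite mulq_conj -e2 -rmorphM in e0; rewrite mulq_conj_polar -e2 -rmorphM in e1.
by split; apply: qscal_inj.
Qed.
End RemainderNorm.

Section LinearRoot.
Variables (A : comNzRingType) (r1 r0 : quat A) (w : A).
Hypothesis qnorm_r1K : qnorm r1 * w = 1.

Definition lin_root : quat A := qscal w * - (qconj r1 * r0).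

Let qscal_wK (r : quat A) : qscal w * (qscal (qnorm r1) * r) = r.
Proof. by rewrite mulrA -rmorphM mulrC qnorm_r1K rmorph1 mul1r. Qed.

Lemma lin_rootP h : r1 * h + r0 = 0 <-> h = lin_root.
Proof.
split=> [root_h | ->].
  rewrite /lin_root -(addr0_eq root_h) !mulrN opprK [qconj r1 * _]mulrA.
  by rewrite conjq_mul qscal_wK.
rewrite /lin_root mulrA -qscal_central -mulrA mulrN mulrA mulq_conj mulrN.
by rewrite qscal_wK addNr.
Qed.

Let qconj_lin_root : qconj lin_root = qscal w * - (qconj r0 * r1).
Proof.
rewrite /lin_root qconjM raddfN /= qconjM qconjK qconj_scal.
by rewrite qscal_central mulNr.
Qed.

Lemma lin_root_trace c : qpolar r0 r1 = qnorm r1 * c ->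
  - (lin_root + qconj lin_root) = qscal c.
Proof.
move=> polar_c; rewrite qconj_lin_root /lin_root -mulrDr -opprD mulrN opprK.
by rewrite conjq_mul_polar polar_c rmorphM qscal_wK.
Qed.

Lemma lin_root_norm c : qnorm r0 = qnorm r1 * c ->
  lin_root * qconj lin_root = qscal c.
Proof.
move=> norm_c; rewrite qconj_lin_root /lin_root 2!mulrN mulrNN.
have norm_prod : qconj r1 * r0 * (qconj r0 * r1) = qscal (qnorm r0 * qnorm r1).
  rewrite mulrA -[qconj r1 * r0 * _]mulrA mulq_conj -qscal_central -mulrA.
  by rewrite conjq_mul -rmorphM.
rewrite -mulrA [qconj r1 * r0 * _]mulrA -qscal_central -mulrA norm_prod.
rewrite mulrA -!rmorphM; congr qscal.
have -> : w * w * (qnorm r0 * qnorm r1) = (qnorm r1 * w) * (qnorm r1 * w) * c.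
  by rewrite norm_c; ring.
by rewrite qnorm_r1K !mul1r.
Qed.
End LinearRoot.

Theorem quadratic_right_factor (A : comNzRingType) (M Q Rm : {poly quat A})
    (N K : {poly A}) (w : A) :
  N \is monic -> size N = 3%N -> M * pconj M = scal_poly (N * K) ->
  M = Q * scal_poly N + Rm -> (size Rm <= 2)%N -> qnorm Rm`_1 * w = 1 ->
  exists! h : quat A,
    (exists Q' : {poly quat A}, M = Q' * ('X - h%:P)) /\
    ('X - h%:P) * ('X - (qconj h)%:P) = scal_poly N.
Proof.
move=> monN sizeN normM divM sizeRm unit_r1.
have [norm_r0 polar_r0] := remainder_norm monN sizeN normM divM sizeRm.
have N2 : N`_2 = 1 by move/monicP: monN; rewrite /lead_coef sizeN.
set h := lin_root Rm`_1 Rm`_0 w.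
(* h' and conj h' commute, so the two linear factors of N can be swapped. *)
have factorN h' : ('X - h'%:P) * ('X - (qconj h')%:P) = scal_poly N ->
    scal_poly N = ('X - (qconj h')%:P) * ('X - h'%:P).
  by move=> <-; rewrite mul_XsubC_comm // conjq_mul mulq_conj.
have normN : ('X - h%:P) * ('X - (qconj h)%:P) = scal_poly N.
  apply: mul_XsubC_eq; rewrite ?size_scal_poly ?sizeN // !coef_map /=.
  - by rewrite N2 rmorph1.
  - exact: lin_root_trace.
  - exact: lin_root_norm.
exists h; split.
  split=> //.
  have [P defRm] : exists P, Rm = P * ('X - h%:P).
    by apply/(linear_right_factor _ sizeRm)/(lin_rootP _ unit_r1).
  exists (Q * ('X - (qconj h)%:P) + P).
  by rewrite mulrDl -mulrA -factorN // -defRm.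
move=> h' [[Q' divM'] normN'].
suff : Rm`_1 * h' + Rm`_0 = 0 by move/(lin_rootP _ unit_r1).
apply/(linear_right_factor _ sizeRm).
exists (Q' - Q * ('X - (qconj h')%:P)).
by rewrite mulrBl -mulrA -factorN // -divM' {1}divM addrC addKr.
Qed.

Section QuatMap.
Variables (A B : comNzRingType) (f : {rmorphism A -> B}).

Fact qmap_is_zmod_morphism : zmod_morphism (qmap f).
Proof. by case=> ? ? ? ? [? ? ? ?]; rewrite /qmap /= !rmorphB. Qed.
Fact qmap_is_monoid_morphism : monoid_morphism (qmap f).
Proof.
split=> [|[? ? ? ?] [? ? ? ?]]; first by rewrite /qmap /= rmorph1 rmorph0.
by rewrite !qmulE /qmap /qmul /= !(rmorphB, rmorphD, rmorphM).
Qed.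
HB.instance Definition _ :=
  GRing.isZmodMorphism.Build (quat A) (quat B) (qmap f) qmap_is_zmod_morphism.
HB.instance Definition _ :=
  GRing.isMonoidMorphism.Build (quat A) (quat B) (qmap f) qmap_is_monoid_morphism.

Lemma qnorm_map r : f (qnorm r) = qnorm (qmap f r).
Proof. by rewrite /qnorm !rmorphD !rmorphXn. Qed.
End QuatMap.

Section PrimalPart.
Variable R : comNzRingType.

Fact dprim_is_zmod_morphism : zmod_morphism (@dprim R).
Proof. by case=> ? ? []. Qed.
Lemma dprimM (x y : dual R) : dprim (x * y) = dprim x * dprim y.
Proof. by []. Qed.
Fact dprim_is_monoid_morphism : monoid_morphism (@dprim R). Proof. by []. Qed.
HB.instance Definition _ :=
  GRing.isZmodMorphism.Build (dual R) R (@dprim R) dprim_is_zmod_morphism.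
HB.instance Definition _ :=
  GRing.isMonoidMorphism.Build (dual R) R (@dprim R) dprim_is_monoid_morphism.

HB.instance Definition _ :=
  GRing.RMorphism.copy (@primal_poly R) (map_poly (qmap (@dprim R))).

Lemma primal_scal_poly (N : {poly dual R}) :
  primal_poly (scal_poly N) = scal_poly (primal_dpoly N).
Proof. by apply/polyP => i; rewrite !coef_map. Qed.
End PrimalPart.

Lemma dual_unit (F : fieldType) (v : dual F) :
  dprim v != 0 -> exists w, v * w = 1.
Proof.
case: v => p d /= p_neq0; exists (Dual p^-1 (- d / p ^+ 2)).
change (Dual (p * p^-1) (p * (- d / p ^+ 2) + d * p^-1) = Dual 1 0).
by congr Dual; field.
Qed.

Lemma qnorm_eq0 (F : realDomainType) (r : quat F) : qnorm r = 0 -> r = 0.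
Proof.
case: r => a b c d; rewrite /qnorm /= => norm0.
have a0 : a = 0 by nra.
have b0 : b = 0 by nra.
have c0 : c = 0 by nra.
have d0 : d = 0 by nra.
by rewrite a0 b0 c0 d0.
Qed.

Lemma primal_qnorm_eq0 (F : realDomainType) (r : quat (dual F)) :
  dprim (qnorm r) = 0 -> qmap (@dprim F) r = 0.
Proof. by rewrite qnorm_map; exact: qnorm_eq0. Qed.

Theorem lemma3 (R : realType) (M : {poly DH R}) (N : {poly dual R}) :
  M \is monic ->
  N \is monic -> size N = 3%N ->
  (* N divides the norm polynomial M * conj(M) in D[t] *)
  (exists K : {poly dual R}, M * pconj M = scal_poly (N * K)) ->
  (* the (real) primal part of N does not divide the primal part P of M in H[t] *)
  ~ (exists Q : {poly H R},
        primal_poly M = Q * scal_poly (primal_dpoly N)) ->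
  exists! h : DH R,
    (exists Q : {poly DH R}, M = Q * ('X - h%:P)) /\
    ('X - h%:P) * ('X - (qconj h)%:P) = scal_poly N.
Proof.
move=> _ monN sizeN [K normM] not_dvd_primal.
have monS : scal_poly N \is monic by exact: monic_map.
set Q := Pdiv.Ring.rdivp M (scal_poly N).
set Rm := Pdiv.Ring.rmodp M (scal_poly N).
have divM : M = Q * scal_poly N + Rm := Pdiv.RingMonic.rdivp_eq monS M.
have sizeRm : (size Rm <= 2)%N.
  by rewrite -ltnS -sizeN -size_scal_poly Pdiv.Ring.ltn_rmodpN0 // monic_neq0.
have [norm_r0 _] := remainder_norm monN sizeN normM divM sizeRm.
suff [w unit_r1] : exists w, qnorm Rm`_1 * w = 1.
  exact: quadratic_right_factor monN sizeN normM divM sizeRm unit_r1.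
(* If qnorm r1 were not invertible, the remainder would have zero primal part,
   making the primal part of N a right divisor of P. *)
apply: dual_unit; apply/eqP => prim_r1; apply: not_dvd_primal.
have prim_r0 : dprim (qnorm Rm`_0) = 0 by rewrite norm_r0 dprimM prim_r1 mul0r.
have primRm : primal_poly Rm = 0.
  apply/polyP => -[|[|i]]; rewrite coef_map coef0 /=.
  - exact: primal_qnorm_eq0.
  - exact: primal_qnorm_eq0.
  - by rewrite nth_default ?(leq_trans sizeRm).
exists (primal_poly Q).
by rewrite {1}divM rmorphD rmorphM /= primRm addr0 primal_scal_poly.
Qed.
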